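(* Let $K:\ell^2\to\mathcal{H}$ be a bounded linear operator into a real Hilbert space $\mathcal{H}$, $f\in\mathcal{H}$, $w=(w_k)$ with $w_k\ge w_0>0$, and $\gamma>0$. The mapping $\mathcal{F}:\ell^2\to\ell^2$, $\mathcal{F}(u)=u-\mathcal{S}_{\gamma w}(u-\gamma K^*(Ku-f))$, is Newton differentiable. With $\mathcal{A}=\mathcal{A}(u)=\{k: |u-\gamma K^*(Ku-f)|_k>\gamma w_k\}$, $\mathcal{I}=\mathcal{I}(u)=\mathbb{N}\setminus\mathcal{A}$, and $K^*K$ split into blocks $\mathcal{M}_{\mathcal{A}\mathcal{A}},\mathcal{M}_{\mathcal{A}\mathcal{I}},\mathcal{M}_{\mathcal{I}\mathcal{A}},\mathcal{M}_{\mathcal{I}\mathcal{I}}$ according to these index sets, a generalized derivative is given by $$\mathcal{G}(u)=\begin{pmatrix}\gamma\mathcal{M}_{\mathcal{A}\mathcal{A}} & \gamma\mathcal{M}_{\mathcal{A}\mathcal{I}}\\ 0 & I_{\mathcal{I}}\end{pmatrix},$$ i.e. $\mathcal{G}(u)=(I-P_{\mathcal{A}})+\gamma P_{\mathcal{A}}K^*K$, where $P_{\mathcal{A}}$ is the coordinate projection onto the indices in $\mathcal{A}$.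
   Context: $K^*$ is the Hilbert space adjoint of $K$; $|x|_k$ means $|x_k|$. For a positive sequence $v$, $\mathcal{S}_v(u)_k=\max\{0,|u_k|-v_k\}\,\mathrm{sgn}(u_k)$, and $\gamma w=(\gamma w_k)$. A mapping $\mathcal{F}:X\to Y$ between Banach spaces is Newton differentiable at $x$ with generalized derivative $\mathcal{G}:X\to L(X,Y)$ if $\lim_{h\to0}\|\mathcal{F}(x+h)-\mathcal{F}(x)-\mathcal{G}(x+h)h\|_Y/\|h\|_X=0$; it is Newton differentiable if this holds at every point. For index sets $\mathcal{B},\mathcal{C}\subset\mathbb{N}$, $\mathcal{M}_{\mathcal{B}\mathcal{C}}=P_{\mathcal{B}}K^*K|_{\ell^2(\mathcal{C})}$, viewed as an operator from sequences supported on $\mathcal{C}$ to sequences supported on $\mathcal{B}$. *)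

From HB Require Import structures.
From mathcomp Require Import all_boot all_order all_algebra.
From mathcomp Require Import all_classical all_reals all_analysis.
Set Implicit Arguments. Unset Strict Implicit. Unset Printing Implicit Defensive.
Import Order.TTheory GRing.Theory Num.Theory numFieldNormedType.Exports.
Local Open Scope ring_scope.

Section Defs.
Variable R : realType.

Definition seqR := nat -> R.

Definition ell2 (u : seqR) : Prop := cvgn (series (fun k => u k ^+ 2)).

Definition l2ip (u v : seqR) : R := limn (series (fun k => u k * v k)).
Definition l2norm (u : seqR) : R := Num.sqrt (limn (series (fun k => u k ^+ 2))).

Definition sadd (u v : seqR) : seqR := fun k => u k + v k.
Definition ssub (u v : seqR) : seqR := fun k => u k - v k.
Definition sscale (a : R) (u : seqR) : seqR := fun k => a * u k.

Definition bounded_linear_l2 (T : seqR -> seqR) : Prop :=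
  [/\ forall u, ell2 u -> ell2 (T u),
      forall a u v, ell2 u -> ell2 v -> T (sadd (sscale a u) v) = sadd (sscale a (T u)) (T v)
    & exists C : R, forall u, ell2 u -> l2norm (T u) <= C * l2norm u].

Definition newton_differentiable_l2 (F : seqR -> seqR) (G : seqR -> seqR -> seqR) : Prop :=
  [/\ forall u, ell2 u -> ell2 (F u),
      forall u, ell2 u -> bounded_linear_l2 (G u)
    & forall u, ell2 u -> forall eps : R, 0 < eps -> exists2 delta : R, 0 < delta &
        forall h, ell2 h -> 0 < l2norm h < delta ->
          l2norm (ssub (ssub (F (sadd u h)) (F u)) (G (sadd u h) h)) <= eps * l2norm h].

Definition soft_thr (v u : seqR) : seqR :=
  fun k => Num.max 0 (`|u k| - v k) * Num.sg (u k).

Definition coord_proj (A : nat -> bool) (h : seqR) : seqR :=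
  fun k => if A k then h k else 0.
End Defs.

Section Hilbert.
Variables (R : realType) (H : completeNormedModType R).

(** [ip] is an inner product on H inducing its norm (so H is a real Hilbert space). *)
Definition is_inner_product (ip : H -> H -> R) : Prop :=
  [/\ forall x y, ip x y = ip y x,
      forall a x y z, ip (a *: x + y) z = a * ip x z + ip y z
    & forall x, ip x x = `|x| ^+ 2].

Definition bounded_linear_to (K : seqR R -> H) : Prop :=
  (forall a u v, ell2 u -> ell2 v -> K (sadd (sscale a u) v) = a *: K u + K v) /\
  exists C : R, forall u, ell2 u -> `|K u| <= C * l2norm u.

Definition is_adjoint (ip : H -> H -> R) (K : seqR R -> H) (Kadj : H -> seqR R) : Prop :=
  (forall h, ell2 (Kadj h)) /\
  forall u h, ell2 u -> ip (K u) h = l2ip u (Kadj h).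

Definition ssn_F (K : seqR R -> H) (Kadj : H -> seqR R) (f : H) (w : seqR R) (gamma : R)
  (u : seqR R) : seqR R :=
  ssub u (soft_thr (sscale gamma w) (ssub u (sscale gamma (Kadj (K u - f))))).

Definition active_set (K : seqR R -> H) (Kadj : H -> seqR R) (f : H) (w : seqR R) (gamma : R)
  (u : seqR R) : nat -> bool :=
  fun k => gamma * w k < `|u k - gamma * Kadj (K u - f) k|.

Definition ssn_G (K : seqR R -> H) (Kadj : H -> seqR R) (f : H) (w : seqR R) (gamma : R)
  (u : seqR R) (h : seqR R) : seqR R :=
  let A := active_set K Kadj f w gamma u in
  sadd (ssub h (coord_proj A h)) (sscale gamma (coord_proj A (Kadj (K h)))).
End Hilbert.

From HB Require Import structures.
From mathcomp Require Import all_boot all_order all_algebra.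
From mathcomp Require Import all_classical all_reals all_analysis.
From mathcomp Require Import ring lra.
Import Order.TTheory GRing.Theory Num.Theory numFieldNormedType.Exports.
Set Implicit Arguments. Unset Strict Implicit.
Local Open Scope classical_set_scope.
Local Open Scope ring_scope.

(* The remainder F(u + h) - F(u) - G(u + h) h vanishes identically for small h.
   In each coordinate, soft thresholding at level t is affine on a neighbourhood
   of x whose size is the distance of |x| to the kink t, provided the branch is
   read off at the perturbed point, which is what G(u + h) does. The argument
   v = u - gamma K^*(Ku - f) lies in l^2, so v_k -> 0 while the thresholds
   gamma w_k stay above gamma w_0 > 0; hence these sizes are bounded below by
   some r > 0. Every coordinate of the increment h - gamma K^*K h is at most
   (1 + gamma |K|^2) |h|, so for |h| < r / (1 + gamma |K|^2) every coordinate
   stays in its affine neighbourhood. *)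

Section RealDomainFacts.
Variable R : realDomainType.
Implicit Types x y : R.

Lemma ler_sqr_norm x y : `|x| <= `|y| -> x ^+ 2 <= y ^+ 2.
Proof.
move=> xy; rewrite -(real_normK (num_real x)) -(real_normK (num_real y)).
by apply: lerXn2r; rewrite ?nnegrE.
Qed.

Lemma le_of_sqr_le_mul x y : 0 <= x -> 0 <= y -> x ^+ 2 <= x * y -> x <= y.
Proof. by rewrite expr2 => x_ge0 y_ge0 xxy; nra. Qed.

End RealDomainFacts.

Section NonnegSeries.
Variables (R : realType) (a : R^nat).
Hypotheses (a_ge0 : forall k, 0 <= a k) (a_cvg : cvgn (series a)).

Lemma series_le_lim n : series a n <= limn (series a).
Proof. by apply: nondecreasing_cvgn_le a_cvg n; apply: nondecreasing_series => k _ _. Qed.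

Lemma term_le_lim_series k : a k <= limn (series a).
Proof.
apply: le_trans (series_le_lim k.+1); rewrite seriesS lerDl /series /=.
exact: sumr_ge0.
Qed.

Lemma lim_series_ge0 : 0 <= limn (series a).
Proof. exact: le_trans (term_le_lim_series 0). Qed.

End NonnegSeries.

Lemma cvg_series_finite_support (R : realType) (a : R^nat) n :
  (forall k, (n <= k)%N -> a k = 0) -> series a @ \oo --> series a n.
Proof.
move=> a0; apply: cvg_near_cst; exists n => // m /= nm.
rewrite -(subnK nm) series_addn big_nat_cond big1 ?addr0 // => k /andP[/andP[nk _] _].
exact: a0.
Qed.

Section Ell2.
Variable R : realType.
Implicit Types u v : seqR R.

Lemma l2norm_ge0 u : 0 <= l2norm u.
Proof. exact: sqrtr_ge0. Qed.

Lemma l2norm_sqr u : ell2 u -> l2norm u ^+ 2 = limn (series (fun k => u k ^+ 2)).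
Proof. by move=> eu; rewrite sqr_sqrtr // lim_series_ge0 // => k; exact: sqr_ge0. Qed.

Lemma coord_le_l2norm u k : ell2 u -> `|u k| <= l2norm u.
Proof.
move=> eu; rewrite -ler_sqr ?nnegrE ?l2norm_ge0 // real_normK ?num_real //.
rewrite l2norm_sqr //; apply: (term_le_lim_series (a := fun j => u j ^+ 2)) => // j.
exact: sqr_ge0.
Qed.

Lemma l2norm0 : l2norm (fun _ => 0) = 0 :> R.
Proof.
rewrite /l2norm (cvg_lim _ (cvg_series_finite_support (n := 0) _)) //.
  by rewrite /series /= big_geq // sqrtr0.
by move=> k _; rewrite expr0n.
Qed.

Lemma ell2_finite_support u n : (forall k, (n <= k)%N -> u k = 0) -> ell2 u.
Proof.
move=> u0; apply/cvg_ex; exists (series (fun k => u k ^+ 2) n).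
by apply: cvg_series_finite_support => k nk; rewrite u0 // expr0n.
Qed.

Lemma l2ip_finite_support u v n : (forall k, (n <= k)%N -> u k = 0) ->
  l2ip u v = series (fun k => u k * v k) n.
Proof.
move=> u0; apply: cvg_lim => //; apply: cvg_series_finite_support => k nk.
by rewrite u0 // mul0r.
Qed.

Lemma l2norm_finite_support u n : (forall k, (n <= k)%N -> u k = 0) ->
  l2norm u = Num.sqrt (series (fun k => u k ^+ 2) n).
Proof.
move=> u0; congr Num.sqrt; apply: cvg_lim => //.
by apply: cvg_series_finite_support => k nk; rewrite u0 // expr0n.
Qed.

Lemma ell2_of_sqr_le u v1 v2 (a b : R) :
  (forall k, u k ^+ 2 <= a * v1 k ^+ 2 + b * v2 k ^+ 2) -> ell2 v1 -> ell2 v2 -> ell2 u.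
Proof.
move=> le_u e1 e2.
have cvg_ab : cvgn (series (a *: (fun k => v1 k ^+ 2) + b *: (fun k => v2 k ^+ 2))).
  by apply: is_cvg_seriesD; apply: is_cvg_seriesZ.
apply: series_le_cvg cvg_ab => k; first exact: sqr_ge0.
  exact: le_trans (sqr_ge0 _) (le_u k).
exact: le_u.
Qed.

Lemma l2norm_sqr_le u v1 v2 (a b : R) :
  (forall k, u k ^+ 2 <= a * v1 k ^+ 2 + b * v2 k ^+ 2) -> ell2 v1 -> ell2 v2 ->
  l2norm u ^+ 2 <= a * l2norm v1 ^+ 2 + b * l2norm v2 ^+ 2.
Proof.
move=> le_u e1 e2; have eu := ell2_of_sqr_le le_u e1 e2.
rewrite !l2norm_sqr //.
have scale_lim (c : R) v : ell2 v ->
    c * limn (series (fun k => v k ^+ 2)) = limn (series (c *: fun k => v k ^+ 2)).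
  by move=> ev; rewrite lim_seriesZ.
rewrite (scale_lim a) // (scale_lim b) // -lim_seriesD; try exact: is_cvg_seriesZ.
by apply: lim_series_le => //; apply: is_cvg_seriesD; apply: is_cvg_seriesZ.
Qed.

Lemma ell2_ssub u v : ell2 u -> ell2 v -> ell2 (ssub u v).
Proof.
apply: (@ell2_of_sqr_le _ _ _ 2 2) => k; rewrite /ssub.
have := sqr_ge0 (u k + v k); rewrite !expr2; lra.
Qed.

Lemma ell2_sscale a u : ell2 u -> ell2 (sscale a u).
Proof.
by move=> eu; apply: (@ell2_of_sqr_le _ u u (a ^+ 2) 0) => // k; rewrite mul0r addr0 exprMn.
Qed.

Lemma ell2_cvg0 u : ell2 u -> u @ \oo --> 0.
Proof.
move=> /cvg_series_cvg_0 /cvgr0Pnorm_lt u2_0; apply/cvgr0Pnorm_lt => e e_gt0.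
apply: filterS (u2_0 _ (exprn_gt0 2 e_gt0)) => k /=.
by rewrite normrX ltr_pXn2r // nnegrE ltW.
Qed.

End Ell2.

Section InnerProduct.
Variables (R : realType) (H : completeNormedModType R) (ip : H -> H -> R).
Hypothesis ipP : is_inner_product ip.

Lemma ipDl x y z : ip (x + y) z = ip x z + ip y z.
Proof. by case: ipP => _ ipl _; rewrite -[x]scale1r ipl mul1r scale1r. Qed.

Lemma ip_linear_r a x y z : ip z (a *: x + y) = a * ip z x + ip z y.
Proof. by case: ipP => ipC ipl _; rewrite ipC ipl !(ipC z). Qed.

Lemma ipDr x y z : ip z (x + y) = ip z x + ip z y.
Proof. by rewrite -[x]scale1r ip_linear_r mul1r scale1r. Qed.

Lemma ip_le_norm x y : ip x y <= `|x| * `|y|.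
Proof.
have [ipC _ ipn] := ipP.
have ip_sum : `|x + y| ^+ 2 = `|x| ^+ 2 + 2 * ip x y + `|y| ^+ 2.
  by rewrite -ipn ipDl !ipDr -!ipn (ipC y x); ring.
have : `|x + y| ^+ 2 <= (`|x| + `|y|) ^+ 2.
  by rewrite lerXn2r ?nnegrE ?addr_ge0 ?ler_normD.
rewrite ip_sum; lra.
Qed.

End InnerProduct.

Definition unit_seq (R : realType) (k : nat) : seqR R := fun j => (j == k)%:R.

Lemma unit_seq_eq0 (R : realType) k j : (k < j)%N -> unit_seq R k j = 0.
Proof. by move=> kj; rewrite /unit_seq gtn_eqF. Qed.

Lemma ell2_unit_seq (R : realType) k : ell2 (unit_seq R k).
Proof. exact: ell2_finite_support (@unit_seq_eq0 R k). Qed.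

Lemma l2ip_unit_seq (R : realType) k (v : seqR R) : l2ip (unit_seq R k) v = v k.
Proof.
rewrite (l2ip_finite_support _ (@unit_seq_eq0 R k)).
rewrite seriesSr /unit_seq eqxx mul1r /series /= big_nat big1 ?add0r // => j /andP[_ jk].
by rewrite ltn_eqF // mul0r.
Qed.

Section Adjoint.
Variables (R : realType) (H : completeNormedModType R) (ip : H -> H -> R).
Variables (K : seqR R -> H) (Kadj : H -> seqR R) (c : R).
Hypotheses (ipP : is_inner_product ip) (adjP : is_adjoint ip K Kadj).
Hypotheses (c_ge0 : 0 <= c) (K_le : forall u, ell2 u -> `|K u| <= c * l2norm u).

Lemma adjoint_coord y k : Kadj y k = ip (K (unit_seq R k)) y.
Proof. by case: adjP => _ adj; rewrite adj ?l2ip_unit_seq //; exact: ell2_unit_seq. Qed.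

Lemma adjoint_linear a x y k : Kadj (a *: x + y) k = a * Kadj x k + Kadj y k.
Proof. by rewrite !adjoint_coord ip_linear_r. Qed.

(* Testing K^* y against its truncation to the first n coordinates bounds every
   partial sum of |K^* y|^2 by (c |y|)^2. *)
Lemma l2norm_adjoint_le y : l2norm (Kadj y) <= c * `|y|.
Proof.
have [ell2_adj adj] := adjP; set v := Kadj y.
have cy_ge0 : 0 <= c * `|y| by rewrite mulr_ge0.
rewrite -[leRHS]ger0_norm // -sqrtr_sqr ler_sqrt ?sqr_ge0 //.
apply: limr_le; first exact: ell2_adj.
apply: nearW => n; set S := series _ n.
pose vn := coord_proj (fun j => (j < n)%N) v.
have vn0 k : (n <= k)%N -> vn k = 0 by rewrite /vn /coord_proj ltnNge => ->.
have e_vn : ell2 vn := ell2_finite_support vn0.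
have ip_vn : ip (K vn) y = S.
  rewrite adj // (l2ip_finite_support _ vn0) /S /series /= !big_nat.
  by apply: eq_bigr => j /andP[_ jn]; rewrite /vn /coord_proj jn expr2.
have norm_vn : l2norm vn = Num.sqrt S.
  rewrite (l2norm_finite_support vn0) /S /series /= !big_nat.
  by congr Num.sqrt; apply: eq_bigr => j /andP[_ jn]; rewrite /vn /coord_proj jn.
have S_ge0 : 0 <= S by apply: sumr_ge0 => j _; exact: sqr_ge0.
have : Num.sqrt S ^+ 2 <= Num.sqrt S * (c * `|y|).
  rewrite sqr_sqrtr // -norm_vn -ip_vn mulrCA mulrA.
  by apply: le_trans (ip_le_norm ipP _ _) _; apply: ler_wpM2r => //; exact: K_le.
move=> /le_of_sqr_le_mul => /(_ (sqrtr_ge0 _) cy_ge0) le_sqrtS.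
by rewrite -(sqr_sqrtr S_ge0) lerXn2r ?nnegrE ?sqrtr_ge0.
Qed.

End Adjoint.

Section SoftThreshold.
Variable R : realDomainType.
Implicit Types t x d : R.

Definition soft t x := Num.max 0 (`|x| - t) * Num.sg x.

(* The admissible size of a perturbation of x that keeps [soft t] affine at x,
   the branch being read off at the perturbed point. *)
Definition soft_margin t x := if `|x| == t then t else `|(`|x| - t)|.

Lemma softE t x : soft t x = if t < `|x| then x - t * Num.sg x else 0.
Proof.
rewrite /soft; case: ltP => tx.
  by rewrite max_r ?subr_ge0 ?ltW // mulrBl mulrC -numEsg.
by rewrite max_l ?mul0r // subr_le0.
Qed.

Lemma norm_soft_le t x : 0 <= t -> `|soft t x| <= `|x|.
Proof.
move=> t_ge0; rewrite /soft normrM normr_sg.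
have [->|x_neq0] := eqVneq x 0; first by rewrite mulr0 normr0.
by rewrite mulr1 ger0_norm ?le_max ?lexx // ge_max normr_ge0 lerBlDr lerDl.
Qed.

Lemma sgrDl x d : `|d| < `|x| -> Num.sg (x + d) = Num.sg x.
Proof.
have := ler_norm d; have := ler_norm (- d); rewrite normrN.
case: (ltgtP x 0) => [x_lt0|x_gt0|->]; last by rewrite normr0 ltNge normr_ge0.
- by rewrite (ltr0_norm x_lt0) (ltr0_sg x_lt0) => ? ? ?; rewrite ltr0_sg //; lra.
- by rewrite (gtr0_norm x_gt0) (gtr0_sg x_gt0) => ? ? ?; rewrite gtr0_sg //; lra.
Qed.

Lemma soft_margin_gt0 t x : 0 < t -> 0 < soft_margin t x.
Proof. by rewrite /soft_margin; case: eqP => // /eqP; rewrite normr_gt0 subr_eq0. Qed.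

Lemma soft_margin_lt t x : `|x| < t -> soft_margin t x = t - `|x|.
Proof. by move=> xt; rewrite /soft_margin lt_eqF // ltr0_norm ?subr_lt0 // opprB. Qed.

Lemma soft_local_affine t x d : 0 < t -> `|d| < soft_margin t x ->
  soft t (x + d) = soft t x + (if t < `|x + d| then d else 0).
Proof.
move=> t_gt0; rewrite /soft_margin !softE.
have le_xd := ler_normD x d.
have := ler_normD (x + d) (- d); rewrite addrK normrN => le_x.
have [xt dt|x_neq_t] := eqVneq `|x| t.
  rewrite xt ltxx; case: ltP => _; last by rewrite !addr0.
  rewrite sgrDl ?xt // {1}[x]numEsg xt; lra.
have [tx|xt|tx] := ltgtP t `|x|; last by rewrite tx eqxx in x_neq_t.
  rewrite (@gtr0_norm _ (`|x| - t)) ?subr_gt0 // => dx.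
  have -> : t < `|x + d| by lra.
  rewrite sgrDl; lra.
rewrite (@ltr0_norm _ (`|x| - t)) ?subr_lt0 // opprB => dx.
have -> : (t < `|x + d|) = false by apply/negbTE; rewrite -leNgt; lra.
by rewrite addr0.
Qed.

End SoftThreshold.

Lemma pos_lower_bound_prefix (R : realDomainType) (rho : nat -> R) n :
  (forall k, 0 < rho k) -> exists2 r : R, 0 < r & forall k, (k < n)%N -> r <= rho k.
Proof.
move=> rho_gt0; elim: n => [|n [r r_gt0 le_r]]; first by exists 1.
exists (Num.min r (rho n)) => [|k]; first by rewrite lt_min r_gt0 rho_gt0.
rewrite ltnS leq_eqVlt => /orP[/eqP ->|kn]; rewrite ge_min ?lexx ?orbT //.
by rewrite le_r.
Qed.

(* Coordinates of a null sequence eventually lie far below thresholds bounded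
   away from 0, so only finitely many margins matter. *)
Lemma uniform_soft_margin (R : realType) (t v : R^nat) (t0 : R) :
  0 < t0 -> (forall k, t0 <= t k) -> v @ \oo --> 0 ->
  exists2 r : R, 0 < r & forall k, r <= soft_margin (t k) (v k).
Proof.
move=> t0_gt0 le_t v0.
have t02_gt0 : 0 < t0 / 2 by rewrite divr_gt0.
have [N _ small_v] := cvgr0_norm_lt _ v0 _ t02_gt0.
have t_gt0 k : 0 < t k by exact: lt_le_trans (le_t k).
have [r r_gt0 le_r] := pos_lower_bound_prefix N (fun k => soft_margin_gt0 (v k) (t_gt0 k)).
exists (Num.min r (t0 / 2)) => [|k]; first by rewrite lt_min r_gt0.
rewrite ge_min; case: (ltnP k N) => [kN|Nk]; first by rewrite le_r.
have vk : `|v k| < t0 / 2 by exact: small_v.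
have tk := le_t k; rewrite soft_margin_lt; last by lra.
by apply/orP; right; lra.
Qed.

Lemma bounded_linear_to_bound (R : realType) (H : completeNormedModType R) (K : seqR R -> H) :
  bounded_linear_to K -> exists2 c : R, 0 <= c & forall u, ell2 u -> `|K u| <= c * l2norm u.
Proof.
case=> _ [C le_C]; exists `|C| => // u eu.
by apply: le_trans (le_C u eu) _; apply: ler_wpM2r; rewrite ?l2norm_ge0 ?ler_norm.
Qed.

Section SemismoothNewton.
Variables (R : realType) (H : completeNormedModType R) (ip : H -> H -> R).
Variables (K : seqR R -> H) (Kadj : H -> seqR R) (f : H) (w : seqR R) (w0 gamma c : R).
Hypotheses (ipP : is_inner_product ip) (adjP : is_adjoint ip K Kadj).
Hypothesis K_linear :
  forall a u v, ell2 u -> ell2 v -> K (sadd (sscale a u) v) = a *: K u + K v.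
Hypotheses (c_ge0 : 0 <= c) (K_le : forall u, ell2 u -> `|K u| <= c * l2norm u).
Hypotheses (w0_gt0 : 0 < w0) (w_ge : forall k, w0 <= w k) (gamma_gt0 : 0 < gamma).

Let F := ssn_F K Kadj f w gamma.
Let G := ssn_G K Kadj f w gamma.

Definition grad_step u := ssub u (sscale gamma (Kadj (K u - f))).

Lemma ssn_F_coord u k : F u k = u k - soft (gamma * w k) (grad_step u k).
Proof. by []. Qed.

Lemma ssn_G_coord u h k :
  G u h k = if gamma * w k < `|grad_step u k| then gamma * Kadj (K h) k else h k.
Proof.
rewrite /G /ssn_G /active_set /grad_step /sadd /ssub /sscale /coord_proj /=.
by case: ifP => _; ring.
Qed.

Lemma K_sadd u h : ell2 u -> ell2 h -> K (sadd u h) = K u + K h.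
Proof.
move=> eu eh; have -> : sadd u h = sadd (sscale 1 u) h.
  by apply: funext => k; rewrite /sadd /sscale mul1r.
by rewrite K_linear // scale1r.
Qed.

Lemma ell2_grad_step u : ell2 u -> ell2 (grad_step u).
Proof. by move=> eu; apply: ell2_ssub => //; apply: ell2_sscale; exact: adjP.1. Qed.

Lemma ell2_ssn_F u : ell2 u -> ell2 (F u).
Proof.
move=> eu; have e_step := ell2_grad_step eu; apply: ell2_ssub => //.
apply: (@ell2_of_sqr_le _ _ _ _ 1 0 _ e_step e_step) => k.
rewrite mul0r addr0 mul1r; apply: ler_sqr_norm; apply: norm_soft_le.
by apply: mulr_ge0; [exact: ltW | exact: le_trans (ltW w0_gt0) (w_ge k)].
Qed.

Lemma l2norm_adjoint_K_le h : ell2 h -> l2norm (Kadj (K h)) <= c ^+ 2 * l2norm h.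
Proof.
move=> eh; apply: le_trans (l2norm_adjoint_le ipP adjP c_ge0 K_le _) _.
by rewrite expr2 -mulrA ler_wpM2l ?K_le.
Qed.

Lemma sqr_ssn_G_le u h k :
  G u h k ^+ 2 <= 1 * h k ^+ 2 + gamma ^+ 2 * Kadj (K h) k ^+ 2.
Proof.
have := sqr_ge0 (h k); have := mulr_ge0 (sqr_ge0 gamma) (sqr_ge0 (Kadj (K h) k)).
by rewrite ssn_G_coord mul1r; case: ifP => _; rewrite ?exprMn; lra.
Qed.

Lemma bounded_linear_ssn_G u : bounded_linear_l2 (G u).
Proof.
have e_G h : ell2 h -> ell2 (G u h).
  by move=> eh; apply: ell2_of_sqr_le (sqr_ssn_G_le u h) eh (adjP.1 (K h)).
split => // [a x y ex ey|].
  apply: funext => k; rewrite ssn_G_coord K_linear // (adjoint_linear ipP adjP).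
  by rewrite /sadd /sscale !ssn_G_coord; case: ifP => _; ring.
have M_ge0 : 0 <= 1 + (gamma * c ^+ 2) ^+ 2 by rewrite addr_ge0 ?sqr_ge0.
exists (Num.sqrt (1 + (gamma * c ^+ 2) ^+ 2)) => h eh.
have KKh_sqr : l2norm (Kadj (K h)) ^+ 2 <= (c ^+ 2 * l2norm h) ^+ 2.
  apply: lerXn2r; rewrite ?nnegrE ?mulr_ge0 ?sqr_ge0 ?l2norm_ge0 //.
  exact: l2norm_adjoint_K_le.
rewrite -(ler_pXn2r (n := 2)) ?nnegrE ?mulr_ge0 ?l2norm_ge0 ?sqrtr_ge0 //.
apply: le_trans (l2norm_sqr_le (sqr_ssn_G_le u h) eh (adjP.1 (K h))) _.
rewrite mul1r (exprMn 2 (Num.sqrt _)) (sqr_sqrtr M_ge0).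
have := ler_wpM2l (sqr_ge0 gamma) KKh_sqr; rewrite !exprMn; nra.
Qed.

Lemma grad_step_sadd u h k : ell2 u -> ell2 h ->
  grad_step (sadd u h) k = grad_step u k + (h k - gamma * Kadj (K h) k).
Proof.
move=> eu eh; rewrite /grad_step /ssub /sscale /sadd K_sadd //.
have -> : K u + K h - f = 1 *: (K u - f) + K h by rewrite scale1r addrAC.
by rewrite (adjoint_linear ipP adjP); ring.
Qed.

Lemma norm_step_increment_le h k : ell2 h ->
  `|h k - gamma * Kadj (K h) k| <= (1 + gamma * c ^+ 2) * l2norm h.
Proof.
move=> eh; have hk := coord_le_l2norm k eh.
have KKhk : `|Kadj (K h) k| <= c ^+ 2 * l2norm h.
  exact: le_trans (coord_le_l2norm k (adjP.1 (K h))) (l2norm_adjoint_K_le eh).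
apply: le_trans (ler_normB _ _) _; rewrite normrM (gtr0_norm gamma_gt0).
have := ler_wpM2l (ltW gamma_gt0) KKhk; lra.
Qed.

Lemma ssn_remainder_eq0 u : ell2 u -> exists2 delta : R, 0 < delta &
  forall h, ell2 h -> l2norm h < delta ->
    ssub (ssub (F (sadd u h)) (F u)) (G (sadd u h) h) = fun _ => 0.
Proof.
move=> eu; have thr_gt0 : 0 < gamma * w0 by rewrite mulr_gt0.
have le_thr k : gamma * w0 <= gamma * w k by rewrite ler_pM2l.
have [r r_gt0 le_r] :=
  uniform_soft_margin thr_gt0 le_thr (ell2_cvg0 (ell2_grad_step eu)).
have L_gt0 : 0 < 1 + gamma * c ^+ 2.
  by have := mulr_ge0 (ltW gamma_gt0) (sqr_ge0 c); lra.
exists (r / (1 + gamma * c ^+ 2)) => [|h eh]; first by rewrite divr_gt0.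
rewrite ltr_pdivlMr // => small_h; apply: funext => k.
have small_d : `|h k - gamma * Kadj (K h) k| < soft_margin (gamma * w k) (grad_step u k).
  apply: le_lt_trans (norm_step_increment_le k eh) _.
  by apply: lt_le_trans (le_r k); rewrite mulrC.
have := soft_local_affine (lt_le_trans thr_gt0 (le_thr k)) small_d.
rewrite -grad_step_sadd // => soft_step.
rewrite /ssub !ssn_F_coord ssn_G_coord soft_step /sadd.
by case: ifP => _; ring.
Qed.

End SemismoothNewton.

Theorem proposition3p7 (R : realType) (H : completeNormedModType R)
  (ip : H -> H -> R) (K : seqR R -> H) (Kadj : H -> seqR R) (f : H)
  (w : seqR R) (w0 gamma : R) :
  is_inner_product ip ->
  bounded_linear_to K ->
  is_adjoint ip K Kadj ->
  0 < w0 -> (forall k, w0 <= w k) ->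
  0 < gamma ->
  newton_differentiable_l2 (ssn_F K Kadj f w gamma) (ssn_G K Kadj f w gamma).
Proof.
move=> ipP K_bl adjP w0_gt0 w_ge gamma_gt0.
have [c c_ge0 K_le] := bounded_linear_to_bound K_bl.
have K_linear := K_bl.1.
split => [u eu|u _|u eu eps eps_gt0].
- exact: (ell2_ssn_F adjP w0_gt0 w_ge gamma_gt0 (u := u)).
- exact: bounded_linear_ssn_G _ _ _ ipP adjP K_linear c_ge0 K_le u.
- have [delta delta_gt0 remainder0] :=
    ssn_remainder_eq0 f ipP adjP K_linear c_ge0 K_le w0_gt0 w_ge gamma_gt0 eu.
  exists delta => // h eh /andP[_ small_h].
  by rewrite remainder0 // l2norm0 mulr_ge0 ?l2norm_ge0 ?ltW.
Qed.
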